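(* Let $U=2^J\cdot3^3$ with $5\le J\ll1$ and $W=U\prod_{5\le p\le w}p$ with $10^{10^{10}}\le w\ll1$, let $b$ be an integer such that $Wn+b$ is amenable, let $Q\ge1$, and let $\mathcal{Q}=\{c_0\bmod Q:\ (Wc_0+b,Q)=(Wc_0+b-1,s(Q))=1\}$. Let $a$ and $q\mid Q$ be positive integers with $(a,q)=1$ and $q\ne1$. Then $$\Bigg|\sum_{c_0\in\mathcal{Q}}e\Big(\frac aqc_0\Big)\Bigg|\le w^{-1/2}|\mathcal{Q}|.$$
   Context: $e(t)=e^{2\pi it}$. $s(n)=\prod_{p\mid n,\ p\equiv-1\ (4),\ p\ne3}p$. A linear polynomial $Kn+b$ ($K\ge1$) is amenable if (i) $6^3\mid K$; (ii) $(b,K)=(b-1,s(K))=1$; (iii) $b-1=2^j3^{2t}(4h+1)$ for some $h\in\mathbb{Z}$ with $3\nmid4h+1$ and $j,t\ge0$ with $2^{j+2}3^{2t+1}\mid K$. *)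

From Stdlib Require Import Reals ZArith Znumtheory List Lia Lra Bool.
From Coquelicot Require Import Coquelicot.
Import ListNotations.
Open Scope Z_scope.

Definition primeb (p : Z) : bool := if prime_dec p then true else false.

Definition zrange (lo n : Z) : list Z :=
  map (fun k => lo + Z.of_nat k) (seq 0 (Z.to_nat n)).

Definition zprod (l : list Z) : Z := fold_right Z.mul 1 l.

Definition s (n : Z) : Z :=
  zprod (filter (fun p => primeb p && (n mod p =? 0) && (p mod 4 =? 3)
                          && negb (p =? 3))
                (zrange 2 (Z.abs n - 1))).

(* K n + b is amenable *)
Definition amenable (K b : Z) : Prop :=
  1 <= K /\
  (6 ^ 3 | K) /\
  Z.gcd b K = 1 /\ Z.gcd (b - 1) (s K) = 1 /\
  exists (h : Z) (j t : nat),
    b - 1 = 2 ^ Z.of_nat j * 3 ^ (2 * Z.of_nat t) * (4 * h + 1) /\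
    ~ (3 | 4 * h + 1) /\
    (2 ^ (Z.of_nat j + 2) * 3 ^ (2 * Z.of_nat t + 1) | K).

Definition U (J : nat) : Z := 2 ^ Z.of_nat J * 3 ^ 3.

(* W = U * prod_{5 <= p <= w, p prime} p ; p <= w iff p <= floor w *)
Definition W (J : nat) (w : R) : Z :=
  U J * zprod (filter primeb (zrange 5 (Int_part w - 4))).

(* the residues c0 mod Q (represented by 0..Q-1) in the set \mathcal{Q} *)
Definition Qset (Wv b Q : Z) : list Z :=
  filter (fun c0 => (Z.gcd (Wv * c0 + b) Q =? 1)
                    && (Z.gcd (Wv * c0 + b - 1) (s Q) =? 1))
         (zrange 0 Q).

Open Scope R_scope.

Definition e (t : R) : C := (cos (2 * PI * t), sin (2 * PI * t)).

Definition Csum (l : list Z) (f : Z -> C) : C :=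
  fold_right (fun c acc => Cplus (f c) acc) (RtoC 0) l.

From Stdlib Require Import Reals ZArith Zwf Znumtheory List Lia Lra Permutation Bool.
From Coquelicot Require Import Coquelicot.

(* Let p be a prime factor of q and M the part of Q prime to p. Membership of c0
   in the set is a conjunction of local conditions at the primes dividing Q, each
   depending only on W c0 + b modulo that prime. Shifting c0 by (q/p) M multiplies
   e(a c0 / q) by e(a M / p) <> 1 and preserves the conditions at the primes of M,
   and also the one at p when p | W; in that case the sum vanishes. Otherwise
   p > w, the sum with the condition at p dropped vanishes, and that condition only
   excludes the c0 with W c0 + b = 0 or 1 (mod p). As p does not divide W M, the
   residue of W c0 + b mod p is equidistributed, with A elements per class, among
   the c0 satisfying the conditions at the primes of M. So the sum has modulus at
   most 2 A while the set has at least (p - 2) A elements, and 2 / (p - 2) <= w^(-1/2). *)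

Ltac decide_zcomparisons :=
  repeat match goal with
  | |- context [?x =? ?y] => destruct (Z.eqb_spec x y)
  | |- context [?x <=? ?y] => destruct (Z.leb_spec x y)
  | |- context [?x <? ?y] => destruct (Z.ltb_spec x y)
  end; simpl; solve [reflexivity | lia].

Section Filters.

Variable A : Type.

Lemma Permutation_filter (f : A -> bool) (l l' : list A) :
  Permutation l l' -> Permutation (filter f l) (filter f l').
Proof.
  induction 1 as [| x l l' _ IH | x y l | l l' l'' _ IH1 _ IH2]; simpl.
  - constructor.
  - destruct (f x); [constructor|]; exact IH.
  - destruct (f x), (f y); first [apply perm_swap | reflexivity].
  - eapply Permutation_trans; eauto.
Qed.

Lemma filter_Permutation_map (f : A -> bool) (g : A -> A) (l : list A) :
  Permutation l (map g l) -> (forall x, In x l -> f (g x) = f x) ->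
  Permutation (filter f l) (map g (filter f l)).
Proof.
  intros Hl Hf. transitivity (filter f (map g l)).
  - now apply Permutation_filter.
  - now rewrite filter_map_swap, (filter_ext_in _ _ _ Hf).
Qed.

Lemma length_filter_andb (f g : A -> bool) (l : list A) :
  length (filter f l) =
  (length (filter (fun x => f x && g x) l)
   + length (filter (fun x => f x && negb (g x)) l))%nat.
Proof.
  induction l as [|x l IH]; simpl; [reflexivity|].
  destruct (f x), (g x); simpl; lia.
Qed.

Lemma length_filter_le (f g : A -> bool) (l : list A) :
  (forall x, f x = true -> g x = true) ->
  (length (filter f l) <= length (filter g l))%nat.
Proof.
  intros Hfg. induction l as [|x l IH]; simpl; [lia|].
  destruct (f x) eqn:Hx; [rewrite (Hfg x Hx)|destruct (g x)]; simpl; lia.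
Qed.

End Filters.

Open Scope Z_scope.

Lemma length_filter_fibers (f : Z -> bool) (r : Z -> Z) (l : list Z)
    (lo : Z) (A n : nat) :
  (forall v, lo <= v < lo + Z.of_nat n ->
     length (filter (fun c => f c && (r c =? v)) l) = A) ->
  length (filter (fun c => f c && (lo <=? r c) && (r c <? lo + Z.of_nat n)) l)
  = (n * A)%nat.
Proof.
  induction n as [|n IH]; intros Hfib.
  - rewrite (filter_ext _ (fun _ => false)), filter_false; [reflexivity|].
    intros c; destruct (f c); decide_zcomparisons.
  - set (top := fun c => r c =? lo + Z.of_nat n).
    rewrite (length_filter_andb _ _ top).
    rewrite (filter_ext (fun c => _ && top c) (fun c => f c && top c)),
      (filter_ext (fun c => _ && negb (top c))
         (fun c => f c && (lo <=? r c) && (r c <? lo + Z.of_nat n))).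
    + unfold top. rewrite (Hfib (lo + Z.of_nat n)), IH
        by first [lia | intros; apply Hfib; lia].
      lia.
    + intros c; unfold top; destruct (f c); decide_zcomparisons.
    + intros c; unfold top; destruct (f c); decide_zcomparisons.
Qed.

Lemma in_zrange x lo n : In x (zrange lo n) <-> lo <= x < lo + n.
Proof.
  unfold zrange. rewrite in_map_iff. split.
  - intros [k [<- Hk]]. apply in_seq in Hk. lia.
  - intros H. exists (Z.to_nat (x - lo)). split; [lia|]. apply in_seq. lia.
Qed.

Lemma NoDup_zrange lo n : NoDup (zrange lo n).
Proof.
  apply FinFun.Injective_map_NoDup; [intros x y H; lia|]. apply seq_NoDup.
Qed.

Definition shift (Q d c : Z) : Z := (c + d) mod Q.

Lemma shift_eq Q d c : Q <> 0 -> shift Q d c = c + d - Q * ((c + d) / Q).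
Proof. intros HQ. unfold shift. rewrite Z.mod_eq by exact HQ. ring. Qed.

Lemma shift_Permutation Q d :
  1 <= Q -> Permutation (zrange 0 Q) (map (shift Q d) (zrange 0 Q)).
Proof.
  intros HQ. apply NoDup_Permutation_bis.
  - apply NoDup_zrange.
  - now rewrite length_map.
  - intros x Hx. apply in_zrange in Hx. apply in_map_iff.
    exists ((x - d) mod Q). split.
    + unfold shift. rewrite Zplus_mod_idemp_l, Z.sub_add. apply Z.mod_small. lia.
    + apply in_zrange. pose proof (Z.mod_pos_bound (x - d) Q). lia.
Qed.

Lemma length_filter_shift (f : Z -> bool) Q d :
  1 <= Q ->
  length (filter f (zrange 0 Q)) =
  length (filter (fun c => f (shift Q d c)) (zrange 0 Q)).
Proof.
  intros HQ. rewrite (Permutation_length (Permutation_filter _ f _ _ (shift_Permutation Q d HQ))).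
  now rewrite filter_map_swap, length_map.
Qed.

Open Scope R_scope.

Lemma Csum_map (l : list Z) (g : Z -> Z) (f : Z -> C) :
  Csum (map g l) f = Csum l (fun x => f (g x)).
Proof. induction l as [|x l IH]; simpl; congruence. Qed.

Lemma Csum_Permutation (l l' : list Z) (f : Z -> C) :
  Permutation l l' -> Csum l f = Csum l' f.
Proof.
  induction 1; simpl; try congruence.
  ring.
Qed.

Lemma Csum_ext_in (l : list Z) (f g : Z -> C) :
  (forall x, In x l -> f x = g x) -> Csum l f = Csum l g.
Proof.
  induction l as [|x l IH]; simpl; intros H; [reflexivity|].
  rewrite H, IH; auto.
Qed.

Lemma Csum_scal (l : list Z) (f : Z -> C) (z : C) :
  Csum l (fun x => z * f x)%C = (z * Csum l f)%C.
Proof. induction l as [|x l IH]; simpl; [|rewrite IH]; ring. Qed.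

Lemma Csum_filter_andb (f g : Z -> bool) (l : list Z) (h : Z -> C) :
  Csum (filter f l) h =
  (Csum (filter (fun x => f x && g x) l) h
   + Csum (filter (fun x => f x && negb (g x)) l) h)%C.
Proof.
  induction l as [|x l IH]; simpl; [ring|].
  destruct (f x), (g x); simpl; rewrite IH; ring.
Qed.

Lemma Csum_eq_0_of_twist (l : list Z) (g : Z -> Z) (f : Z -> C) (z : C) :
  Permutation l (map g l) -> (forall x, In x l -> f (g x) = (z * f x)%C) ->
  z <> RtoC 1 -> Csum l f = RtoC 0.
Proof.
  intros Hperm Hf Hz.
  assert (Hfix : Csum l f = (z * Csum l f)%C).
  { rewrite <- Csum_scal, (Csum_Permutation _ _ f Hperm), Csum_map.
    now apply Csum_ext_in. }
  assert (H1z : (RtoC 1 - z)%C <> RtoC 0).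
  { intros E. apply Hz. replace z with (RtoC 1 - (RtoC 1 - z))%C by ring.
    rewrite E. ring. }
  replace (Csum l f) with (/ (RtoC 1 - z) * (Csum l f - z * Csum l f))%C
    by (field; exact H1z).
  rewrite <- Hfix. ring.
Qed.

Lemma e_add x y : e (x + y) = (e x * e y)%C.
Proof.
  unfold e, Cmult; simpl.
  replace (2 * PI * (x + y)) with (2 * PI * x + 2 * PI * y) by ring.
  rewrite cos_plus, sin_plus. f_equal; ring.
Qed.

Lemma e_IZR k : e (IZR k) = RtoC 1.
Proof.
  assert (Hs : sin (IZR k * PI) = 0) by (apply sin_eq_0_1; eauto).
  unfold e, RtoC.
  replace (2 * PI * IZR k) with (2 * (IZR k * PI)) by ring.
  rewrite cos_2a_sin, sin_2a, Hs. f_equal; ring.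
Qed.

Lemma e_eq_1 x : e x = RtoC 1 -> exists k, x = IZR k.
Proof.
  unfold e, RtoC. intros H. injection H as Hcos _.
  replace (2 * PI * x) with (2 * (x * PI)) in Hcos by ring.
  rewrite cos_2a_sin in Hcos.
  destruct (sin_eq_0_0 (x * PI)) as [k Hk]; [nra|].
  exists k. pose proof PI_RGT_0. apply Rmult_eq_reg_r with PI; lra.
Qed.

Lemma Cmod_e x : Cmod (e x) = 1.
Proof.
  unfold e, Cmod; simpl.
  pose proof (sin2_cos2 (2 * PI * x)) as H. unfold Rsqr in H.
  rewrite !Rmult_1_r, Rplus_comm, H. apply sqrt_1.
Qed.

Lemma Cmod_Csum_e_le (l : list Z) (h : Z -> R) :
  Cmod (Csum l (fun c => e (h c))) <= INR (length l).
Proof.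
  induction l as [|x l IH]; simpl Csum; simpl length.
  - rewrite Cmod_0. apply Rle_refl.
  - rewrite S_INR. eapply Rle_trans; [apply Cmod_triangle|].
    rewrite Cmod_e. lra.
Qed.

Lemma e_mul_shift a q Q d c :
  (0 < q)%Z -> Q <> 0%Z -> (q | Q)%Z ->
  e (IZR a / IZR q * IZR (shift Q d c)) =
  (e (IZR a / IZR q * IZR d) * e (IZR a / IZR q * IZR c))%C.
Proof.
  intros Hq HQ [k ->].
  assert (Hq0 : IZR q <> 0) by (apply eq_IZR_contrapositive; lia).
  rewrite shift_eq by lia. set (t := ((c + d) / (k * q))%Z).
  replace (IZR a / IZR q * IZR (c + d - k * q * t))
    with (IZR a / IZR q * IZR d + IZR a / IZR q * IZR c + IZR (- (a * k * t)))
    by (rewrite minus_IZR, plus_IZR, opp_IZR, !mult_IZR; field; exact Hq0).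
  rewrite !e_add, e_IZR. ring.
Qed.

Lemma e_div_neq_1 a q d :
  (0 < q)%Z -> ~ (q | a * d)%Z -> e (IZR a / IZR q * IZR d) <> RtoC 1.
Proof.
  intros Hq Hndiv H. apply e_eq_1 in H as [k Hk]. apply Hndiv. exists k.
  apply eq_IZR. rewrite !mult_IZR, <- Hk. field. apply eq_IZR_contrapositive. lia.
Qed.

Open Scope Z_scope.

Lemma exists_prime_divisor n : 1 < n -> exists p, prime p /\ (p | n).
Proof.
  induction n as [n IH] using (well_founded_induction (Zwf_well_founded 0)).
  intros Hn.
  destruct (prime_dec n) as [Hp|Hnp]; [exists n; auto using Z.divide_refl|].
  destruct (not_prime_divide n Hn Hnp) as [k [Hk Hkn]].
  destruct (IH k) as [p [Hp Hpk]]; [unfold Zwf; lia|lia|].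
  exists p. split; [exact Hp|]. eapply Z.divide_trans; eauto.
Qed.

Lemma gcd_eq_1_iff x n :
  1 <= n -> Z.gcd x n = 1 <-> forall l, prime l -> (l | n) -> ~ (l | x).
Proof.
  intros Hn. split.
  - intros Hg l Hl Hln Hlx.
    assert (Hd : (l | Z.gcd x n)) by (apply Z.gcd_greatest; auto).
    rewrite Hg in Hd. apply prime_ge_2 in Hl. apply Z.divide_pos_le in Hd; lia.
  - intros H. destruct (Z.eq_dec (Z.gcd x n) 1) as [|Hne]; [assumption|].
    assert (Hpos : 0 < Z.gcd x n).
    { pose proof (Z.gcd_nonneg x n).
      enough (Z.gcd x n <> 0) by lia. intros Hz. apply Z.gcd_eq_0 in Hz. lia. }
    destruct (exists_prime_divisor (Z.gcd x n)) as [l [Hl Hlg]]; [lia|].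
    exfalso. apply (H l Hl).
    + eapply Z.divide_trans; [exact Hlg|apply Z.gcd_divide_r].
    + eapply Z.divide_trans; [exact Hlg|apply Z.gcd_divide_l].
Qed.

Lemma exists_coprime_part p n :
  prime p -> 1 <= n ->
  exists M, 1 <= M /\ (M | n) /\ ~ (p | M) /\
    forall l, prime l -> (l | n) -> l <> p -> (l | M).
Proof.
  intros Hp. pose proof (prime_ge_2 p Hp).
  induction n as [n IH] using (well_founded_induction (Zwf_well_founded 0)).
  intros Hn.
  destruct (Zdivide_dec p n) as [[n' ->]|Hpn].
  - destruct (IH n') as [M [HM [HMn [HpM Hl]]]]; [unfold Zwf; nia|nia|].
    exists M. repeat split; auto using Z.divide_mul_l.
    intros l Hl' Hln Hlp. apply Hl; auto.
    destruct (prime_mult l Hl' _ _ Hln) as [|Hlp']; [assumption|].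
    now apply prime_div_prime in Hlp'.
  - exists n. repeat split; auto using Z.divide_refl.
Qed.

Lemma divide_zprod_of_In l x : In x l -> (x | zprod l).
Proof.
  induction l as [|y l IH]; simpl; [tauto|].
  intros [<-|H]; [apply Z.divide_factor_l|apply Z.divide_mul_r; auto].
Qed.

Lemma In_of_prime_divide_zprod l p :
  prime p -> (forall x, In x l -> prime x) -> (p | zprod l) -> In p l.
Proof.
  intros Hp Hl. induction l as [|x l IH]; simpl; intros H.
  - apply prime_ge_2 in Hp. apply Z.divide_pos_le in H; lia.
  - destruct (prime_mult p Hp _ _ H) as [Hx|Hr].
    + left. symmetry. apply prime_div_prime; simpl in Hl; auto.
    + right. apply IH; simpl in Hl; auto.
Qed.

Lemma primeb_spec p : primeb p = true <-> prime p.
Proof. unfold primeb. destruct (prime_dec p); split; auto; discriminate. Qed.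

Lemma s_pos n : 1 <= s n.
Proof.
  unfold s. generalize (zrange 2 (Z.abs n - 1)) as l.
  induction l as [|x l IH]; simpl; [lia|].
  destruct (_ && _) eqn:Hx; simpl; [|exact IH].
  rewrite !andb_true_iff, primeb_spec in Hx. destruct Hx as [[[Hx _] _] _].
  apply prime_ge_2 in Hx. nia.
Qed.

Lemma prime_divide_s n l :
  1 <= n -> prime l -> (l | s n) <-> (l | n) /\ l mod 4 = 3 /\ l <> 3.
Proof.
  intros Hn Hl. pose proof (prime_ge_2 l Hl) as Hl2. unfold s.
  rewrite <- (Z.mod_divide n l) by lia. split.
  - intros H. apply In_of_prime_divide_zprod in H as Hin; [|exact Hl|].
    + apply filter_In in Hin as [_ Hb].
      rewrite !andb_true_iff, negb_true_iff, !Z.eqb_eq, Z.eqb_neq in Hb. tauto.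
    + intros x Hx. apply filter_In in Hx as [_ Hb].
      rewrite !andb_true_iff, primeb_spec in Hb. tauto.
  - intros [Hln [H4 H3]]. apply divide_zprod_of_In, filter_In. split.
    + apply in_zrange. apply Z.mod_divide in Hln; [|lia].
      apply Z.divide_pos_le in Hln; lia.
    + rewrite Hln, H4, (proj2 (primeb_spec l) Hl).
      apply Z.eqb_neq in H3. now rewrite H3.
Qed.

Definition admissible (Wv b n c : Z) : bool :=
  (Z.gcd (Wv * c + b) n =? 1) && (Z.gcd (Wv * c + b - 1) (s n) =? 1).

Lemma Qset_filter Wv b Q : Qset Wv b Q = filter (admissible Wv b Q) (zrange 0 Q).
Proof. reflexivity. Qed.

Definition locally_admissible (l x : Z) : Prop :=
  ~ (l | x) /\ (l mod 4 = 3 -> l <> 3 -> ~ (l | x - 1)).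

Lemma admissible_spec Wv b n c :
  1 <= n ->
  admissible Wv b n c = true <->
  forall l, prime l -> (l | n) -> locally_admissible l (Wv * c + b).
Proof.
  intros Hn. unfold admissible, locally_admissible.
  rewrite andb_true_iff, !Z.eqb_eq, (gcd_eq_1_iff _ _ Hn), (gcd_eq_1_iff _ _ (s_pos n)).
  split.
  - intros [H1 H2] l Hl Hln. split; [auto|]. intros H4 H3.
    apply H2; [exact Hl|]. now apply prime_divide_s.
  - intros H. split; [intros l Hl Hln; now apply H|].
    intros l Hl Hls. apply prime_divide_s in Hls as [Hln [H4 H3]]; auto.
    now apply H.
Qed.

Lemma locally_admissible_congr l x y :
  (l | y - x) -> locally_admissible l x -> locally_admissible l y.
Proof.
  intros Hd [H0 H1]. split.
  - intros Hy. apply H0. replace x with (y - (y - x)) by ring.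
    now apply Z.divide_sub_r.
  - intros H4 H3 Hy. apply (H1 H4 H3). replace (x - 1) with (y - 1 - (y - x)) by ring.
    now apply Z.divide_sub_r.
Qed.

Lemma admissible_congr Wv b n c c' :
  1 <= n -> (forall l, prime l -> (l | n) -> (l | Wv * (c' - c))) ->
  admissible Wv b n c' = admissible Wv b n c.
Proof.
  intros Hn Hd. apply eq_true_iff_eq. rewrite !admissible_spec by exact Hn.
  split; intros H l Hl Hln.
  - apply (locally_admissible_congr _ (Wv * c' + b)); auto.
    replace (Wv * c + b - (Wv * c' + b)) with (- (Wv * (c' - c))) by ring.
    now apply Z.divide_opp_r, Hd.
  - apply (locally_admissible_congr _ (Wv * c + b)); auto.
    replace (Wv * c' + b - (Wv * c + b)) with (Wv * (c' - c)) by ring. auto.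
Qed.

Lemma admissible_divisor Wv b n M c :
  1 <= M -> (M | n) -> 1 <= n ->
  admissible Wv b n c = true -> admissible Wv b M c = true.
Proof.
  intros HM HMn Hn. rewrite !admissible_spec by assumption.
  intros H l Hl HlM. apply H; [exact Hl|]. eapply Z.divide_trans; eauto.
Qed.

Lemma admissible_at_prime Wv b n M p c :
  1 <= n -> 1 <= M -> prime p -> (p | n) ->
  (forall l, prime l -> (l | n) -> l <> p -> (l | M)) ->
  admissible Wv b M c = true ->
  admissible Wv b n c = true <-> locally_admissible p (Wv * c + b).
Proof.
  intros Hn HM Hp Hpn HlM. rewrite !admissible_spec by assumption.
  intros HMc. split; [intros Hnc; now apply Hnc|].
  intros Hpc l Hl Hln. destruct (Z.eq_dec l p) as [->|Hlp]; [exact Hpc|].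
  apply HMc; auto.
Qed.

Lemma locally_admissible_of_mod p x :
  1 < p -> 2 <= x mod p -> locally_admissible p x.
Proof.
  intros Hp Hx. split.
  - intros Hd. apply Zdivide_mod in Hd. lia.
  - intros _ _ [k Hk]. replace x with (1 + k * p) in Hx by lia.
    rewrite Z_mod_plus_full, Z.mod_small in Hx; lia.
Qed.

Lemma lt_of_prime_not_divide_W J w p :
  (1 <= J)%nat -> prime p -> ~ (p | W J w) -> (w < IZR p)%R.
Proof.
  intros HJ Hp HpW. pose proof (prime_ge_2 p Hp).
  assert (Hp23 : p <> 2 /\ p <> 3).
  { split; intros ->; apply HpW; unfold W, U; apply Z.divide_mul_l.
    - apply Z.divide_mul_l.
      replace (Z.of_nat J) with (Z.succ (Z.of_nat (J - 1))) by lia.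
      rewrite Z.pow_succ_r by lia. apply Z.divide_factor_l.
    - apply Z.divide_mul_r. exists 9. reflexivity. }
  assert (Hp4 : p <> 4).
  { intros ->. apply prime_alt in Hp as [_ Hp]. apply (Hp 2); [lia|]. exists 2. reflexivity. }
  destruct (Z_lt_le_dec (Int_part w) p) as [Hlt|Hle].
  - unfold Int_part in Hlt. destruct (archimed w) as [Hup _].
    apply Rlt_le_trans with (IZR (up w)); [exact Hup|]. apply IZR_le. lia.
  - exfalso. apply HpW. unfold W. apply Z.divide_mul_r, divide_zprod_of_In, filter_In.
    split; [apply in_zrange; lia|]. now apply primeb_spec.
Qed.

Lemma two_le_Rpower_mul (w P : R) :
  (100 <= w)%R -> (w < P)%R -> (2 <= Rpower w (- (1 / 2)) * (P - 2))%R.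
Proof.
  intros Hw HP. rewrite Rpower_Ropp.
  replace (1 / 2)%R with (/ 2)%R by field. rewrite Rpower_sqrt by lra.
  pose proof (sqrt_sqrt w ltac:(lra)) as Hs. pose proof (sqrt_pos w) as Hs0.
  set (r := sqrt w) in *.
  assert (10 <= r)%R by nra.
  apply Rmult_le_reg_l with r; [lra|].
  rewrite <- Rmult_assoc, Rinv_r by lra. nra.
Qed.

Lemma mod_eq_of_divide_sub p x y : (p | x - y) -> x mod p = y mod p.
Proof. intros [k Hk]. replace x with (y + k * p) by lia. apply Z_mod_plus_full. Qed.

Lemma mod_add_eqb p r v :
  0 <= r < p -> 0 <= v < p -> ((r + v) mod p =? v) = (r =? 0).
Proof.
  intros Hr Hv. destruct (Z_lt_le_dec (r + v) p).
  - rewrite Z.mod_small by lia. decide_zcomparisons.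
  - replace (r + v) with (r + v - p + 1 * p) by ring.
    rewrite Z_mod_plus_full, Z.mod_small by lia. decide_zcomparisons.
Qed.

Section Exponential_sum.

Variables Wv b Q a q p M : Z.
Hypothesis HQ : 1 <= Q.
Hypothesis Hq : 0 < q.
Hypothesis HqQ : (q | Q).
Hypothesis Hp : prime p.
Hypothesis Hpq : (p | q).
Hypothesis Hpa : ~ (p | a).
Hypothesis HM : 1 <= M.
Hypothesis HMQ : (M | Q).
Hypothesis HpM : ~ (p | M).
Hypothesis HMprimes : forall l, prime l -> (l | Q) -> l <> p -> (l | M).

Lemma not_divide_a_mul_shift : ~ (q | a * (q / p * M)).
Proof.
  pose proof (prime_ge_2 p Hp). destruct Hpq as [q' Hq'].
  rewrite Hq', Z.div_mul by lia. intros [k Hk].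
  assert (HaM : a * M = k * p).
  { apply (Z.mul_reg_l _ _ q'); [nia|]. lia. }
  assert (Hdiv : (p | a * M)) by (exists k; exact HaM).
  now destruct (prime_mult p Hp _ _ Hdiv).
Qed.

Lemma Csum_admissible_eq_0 n :
  1 <= n ->
  (forall l, prime l -> (l | n) -> (l | Wv * (q / p * M)) /\ (l | Wv * Q)) ->
  Csum (filter (admissible Wv b n) (zrange 0 Q)) (fun c => e (IZR a / IZR q * IZR c))
  = RtoC 0.
Proof.
  intros Hn Hl. set (d := q / p * M).
  apply (Csum_eq_0_of_twist _ (shift Q d) _ (e (IZR a / IZR q * IZR d))).
  - apply filter_Permutation_map; [now apply shift_Permutation|].
    intros c _. apply admissible_congr; [exact Hn|]. intros l Hl' Hln.
    destruct (Hl l Hl' Hln) as [Hld HlQ].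
    rewrite shift_eq by lia.
    replace (Wv * (c + d - Q * ((c + d) / Q) - c))
      with (Wv * d - Wv * Q * ((c + d) / Q)) by ring.
    apply Z.divide_sub_r; [exact Hld|now apply Z.divide_mul_l].
  - intros c _. apply e_mul_shift; [exact Hq|lia|exact HqQ].
  - apply e_div_neq_1; [exact Hq|apply not_divide_a_mul_shift].
Qed.

Lemma Csum_Qset_eq_0_of_divide :
  (p | Wv) ->
  Csum (filter (admissible Wv b Q) (zrange 0 Q)) (fun c => e (IZR a / IZR q * IZR c))
  = RtoC 0.
Proof.
  intros HpW. apply Csum_admissible_eq_0; [exact HQ|]. intros l Hl HlQ. split.
  - destruct (Z.eq_dec l p) as [->|Hlp].
    + now apply Z.divide_mul_l.
    + now apply Z.divide_mul_r, Z.divide_mul_r, HMprimes.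
  - now apply Z.divide_mul_r.
Qed.

Definition residue_count (v : Z) : nat :=
  length (filter (fun c => admissible Wv b M c && ((Wv * c + b) mod p =? v))
            (zrange 0 Q)).

Lemma residue_count_eq v : ~ (p | Wv) -> 0 <= v < p -> residue_count v = residue_count 0.
Proof.
  intros HpW Hv. pose proof (prime_ge_2 p Hp).
  assert (Hrel : rel_prime p (Wv * M)).
  { apply prime_rel_prime; [exact Hp|]. intros H'. now destruct (prime_mult p Hp _ _ H'). }
  destruct (rel_prime_bezout _ _ Hrel) as [u1 u2 Hb].
  set (t := M * (u2 * v)).
  unfold residue_count. rewrite (length_filter_shift _ Q t HQ).
  f_equal. apply filter_ext_in. intros c _.
  rewrite shift_eq by lia. set (k := (c + t) / Q). f_equal.
  - apply admissible_congr; [exact HM|]. intros l Hl HlM.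
    replace (Wv * (c + t - Q * k - c)) with (Wv * t - Wv * Q * k) by ring.
    apply Z.divide_sub_r.
    + now apply Z.divide_mul_r, Z.divide_mul_l.
    + apply Z.divide_mul_l, Z.divide_mul_r. eapply Z.divide_trans; eauto.
  - assert (Hres : (Wv * (c + t - Q * k) + b) mod p = ((Wv * c + b) mod p + v) mod p).
    { rewrite Zplus_mod_idemp_l. apply mod_eq_of_divide_sub.
      destruct (Z.divide_trans _ _ _ Hpq HqQ) as [Q' ->].
      exists (- (u1 * v) - Wv * Q' * k). unfold t.
      transitivity ((u1 * p + u2 * (Wv * M)) * v - v - (u1 * v + Wv * Q' * k) * p);
        [ring|rewrite Hb; ring]. }
    rewrite Hres. apply mod_add_eqb; [apply Z.mod_pos_bound|]; lia.
Qed.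

Lemma admissible_of_residue_ge_2 c :
  admissible Wv b M c = true -> 2 <= (Wv * c + b) mod p -> admissible Wv b Q c = true.
Proof.
  intros HMc Hrc. pose proof (prime_ge_2 p Hp).
  apply (admissible_at_prime _ _ _ M p); auto.
  - eapply Z.divide_trans; eauto.
  - apply locally_admissible_of_mod; [lia|exact Hrc].
Qed.

Lemma Csum_Qset_eq_opp_excluded :
  Csum (filter (admissible Wv b Q) (zrange 0 Q)) (fun c => e (IZR a / IZR q * IZR c)) =
  (- Csum (filter (fun c => admissible Wv b M c && negb (admissible Wv b Q c))
             (zrange 0 Q)) (fun c => e (IZR a / IZR q * IZR c)))%C.
Proof.
  set (chi := fun c => e (IZR a / IZR q * IZR c)).
  assert (HM0 : Csum (filter (admissible Wv b M) (zrange 0 Q)) chi = RtoC 0).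
  { apply Csum_admissible_eq_0; [exact HM|]. intros l Hl HlM. split.
    - now apply Z.divide_mul_r, Z.divide_mul_r.
    - apply Z.divide_mul_r. eapply Z.divide_trans; eauto. }
  rewrite (Csum_filter_andb _ (admissible Wv b Q)) in HM0.
  rewrite (filter_ext _ (admissible Wv b Q)) in HM0.
  - set (S := Csum (filter (admissible Wv b Q) _) chi) in *.
    set (E := Csum (filter (fun c => _ && negb _) _) chi) in *.
    replace S with (S + E - E)%C by ring. rewrite HM0. ring.
  - intros c. destruct (admissible Wv b Q c) eqn:Hc; [|apply andb_false_r].
    now rewrite (admissible_divisor _ _ Q).
Qed.

Lemma length_excluded_le :
  ~ (p | Wv) ->
  (length (filter (fun c => admissible Wv b M c && negb (admissible Wv b Q c))
             (zrange 0 Q))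
   <= 2 * residue_count 0)%nat.
Proof.
  intros HpW. pose proof (prime_ge_2 p Hp).
  rewrite <- (length_filter_fibers (admissible Wv b M) (fun c => (Wv * c + b) mod p) _ 0 _ 2)
    by (intros v Hv; apply (residue_count_eq v); [exact HpW|lia]).
  apply length_filter_le. intros c Hc. apply andb_prop in Hc as [HMc HQc].
  rewrite HMc. pose proof (Z.mod_pos_bound (Wv * c + b) p ltac:(lia)).
  destruct (Z_lt_le_dec ((Wv * c + b) mod p) 2) as [|Hrc].
  - decide_zcomparisons.
  - now rewrite admissible_of_residue_ge_2 in HQc.
Qed.

Lemma length_Qset_ge :
  ~ (p | Wv) ->
  (Z.to_nat (p - 2) * residue_count 0
   <= length (filter (admissible Wv b Q) (zrange 0 Q)))%nat.
Proof.
  intros HpW. pose proof (prime_ge_2 p Hp).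
  rewrite <- (length_filter_fibers (admissible Wv b M) (fun c => (Wv * c + b) mod p) _ 2)
    by (intros v Hv; apply (residue_count_eq v); [exact HpW|lia]).
  apply length_filter_le. intros c Hc. apply andb_prop in Hc as [Hc _].
  apply andb_prop in Hc as [HMc Hrc]. apply admissible_of_residue_ge_2; [exact HMc|lia].
Qed.

Lemma Cmod_Csum_Qset_le_of_not_divide (lam : R) :
  ~ (p | Wv) -> (2 <= lam * (IZR p - 2))%R ->
  (Cmod (Csum (filter (admissible Wv b Q) (zrange 0 Q))
           (fun c => e (IZR a / IZR q * IZR c)))
   <= lam * INR (length (filter (admissible Wv b Q) (zrange 0 Q))))%R.
Proof.
  intros HpW Hlam. pose proof (prime_ge_2 p Hp) as Hp2.
  rewrite Csum_Qset_eq_opp_excluded, Cmod_opp.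
  eapply Rle_trans; [apply Cmod_Csum_e_le|].
  pose proof (le_INR _ _ (length_excluded_le HpW)) as Hexcl.
  pose proof (le_INR _ _ (length_Qset_ge HpW)) as HQset.
  rewrite !mult_INR in Hexcl, HQset.
  rewrite INR_IZR_INZ, Z2Nat.id, minus_IZR in HQset by lia.
  assert (Hlam0 : (0 <= lam)%R) by (apply IZR_le in Hp2; nra).
  pose proof (pos_INR (residue_count 0)). simpl in Hexcl. nra.
Qed.

End Exponential_sum.

Open Scope R_scope.

Theorem lemma4 (J : nat) (w : R) (b Q a q : Z) :
  (5 <= J)%nat ->
  IZR (10 ^ (10 ^ 10))%Z <= w ->
  amenable (W J w) b ->
  (1 <= Q)%Z ->
  (0 < a)%Z -> (0 < q)%Z -> (q | Q)%Z -> Z.gcd a q = 1%Z -> q <> 1%Z ->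
  Cmod (Csum (Qset (W J w) b Q) (fun c0 => e (IZR a / IZR q * IZR c0)))
    <= Rpower w (- (1 / 2)) * INR (length (Qset (W J w) b Q)).
Proof.
  (* The bound holds for every b. *)
  intros HJ Hw _ HQ _ Hq HqQ Hgcd Hq1.
  assert (Hw100 : 100 <= w).
  { assert (Hpow : (10 ^ 2 <= 10 ^ (10 ^ 10))%Z)
      by (apply Z.pow_le_mono_r; [reflexivity|vm_compute; discriminate]).
    apply IZR_le in Hpow. change (10 ^ 2)%Z with 100%Z in Hpow.
    exact (Rle_trans _ _ _ Hpow Hw). }
  (* Otherwise lia would try to evaluate 10 ^ (10 ^ 10). *)
  clear Hw.
  destruct (exists_prime_divisor q) as [p [Hp Hpq]]; [lia|].
  assert (Hpa : ~ (p | a)%Z).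
  { intros Hpa. apply (proj1 (gcd_eq_1_iff a q ltac:(lia)) Hgcd p Hp Hpq Hpa). }
  destruct (exists_coprime_part p Q Hp HQ) as [M [HM [HMQ [HpM HMprimes]]]].
  rewrite Qset_filter.
  destruct (Zdivide_dec p (W J w)) as [HpW|HpW].
  - rewrite (Csum_Qset_eq_0_of_divide _ _ _ _ _ p M); auto.
    rewrite Cmod_0. apply Rmult_le_pos; [apply Rlt_le, exp_pos|apply pos_INR].
  - apply (Cmod_Csum_Qset_le_of_not_divide _ _ _ _ _ p M); auto.
    apply two_le_Rpower_mul; [exact Hw100|].
    apply (lt_of_prime_not_divide_W J); auto; lia.
Qed.
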